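(* Let $\phi$ be a singular-expansive flow of a compact metric space $X$. Then: (1) the set of periodic orbits of $\phi$ is countable; (2) if $Sing(\phi)=\emptyset$ or $Sing(\phi)$ consists of finitely many isolated points of $X$, then $\phi$ is expansive; (3) if $Sing(\phi)$ is dynamically isolated, then for every $t>0$ the set of periodic orbits of $\phi$ with period in $(0,t]$ is finite.
   Context: A flow is a continuous $\phi:\mathbb{R}\times X\to X$, $\phi_t(x)=\phi(t,x)$, $\phi_0=\mathrm{id}$, $\phi_{t+s}=\phi_t\circ\phi_s$; $\phi_I(x)=\{\phi_t(x):t\in I\}$. $Sing(\phi)=\{\sigma:\phi_t(\sigma)=\sigma\ \forall t\}$; $dist(z,A)=\inf_{a\in A}d(z,a)$, with $dist(z,\emptyset)=diam(X)$. A point $x\notin Sing(\phi)$ is periodic if $\phi_t(x)=x$ for some $t>0$; the least such $t$ is its period. A compact invariant set $K$ ($\phi_t(K)=K$ for all $t$) is dynamically isolated if there is a neighborhood $U$ of $K$ with $K=\bigcap_{t\in\mathbb{R}}\phi_t(U)$. $\phi$ is singular-expansive (on $X$) if for every $\epsilon>0$ there is $\delta>0$ such that whenever $x,y\in X$ and an increasing homeomorphism $s:\mathbb{R}\to\mathbb{R}$ satisfy $d(\phi_t(x),\phi_{s(t)}(y))\le\delta\,dist(\phi_t(x),Sing(\phi))$ for all $t$, then $\phi_{s(t_0)}(y)\in\phi_{[t_0-\epsilon,t_0+\epsilon]}(x)$ for some $t_0$. $\phi$ is expansive on $\Lambda\subset X$ (Bowen–Walters) if for every $\epsilon>0$ there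 is $\delta>0$ such that whenever $x,y\in\Lambda$ and a continuous $s:\mathbb{R}\to\mathbb{R}$ with $s(0)=0$ satisfy $d(\phi_t(x),\phi_{s(t)}(y))\le\delta$ for all $t$, then $y\in\phi_{[-\epsilon,\epsilon]}(x)$; expansive means expansive on $X$. *)

From Stdlib Require Import Reals List ClassicalEpsilon.
From Coquelicot Require Import Coquelicot.
Open Scope R_scope.

Record MetricSpace := {
  carrier :> Type;
  d : carrier -> carrier -> R;
  d_nonneg : forall x y, 0 <= d x y;
  d_eq0 : forall x y, d x y = 0 <-> x = y;
  d_sym : forall x y, d x y = d y x;
  d_triangle : forall x y z, d x z <= d x y + d y z
}.

Arguments d {_}.

Section Metric.
Variable X : MetricSpace.

Definition open_set (U : X -> Prop) : Prop :=
  forall x, U x -> exists r, 0 < r /\ forall y, d x y < r -> U y.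

Definition compact_set (K : X -> Prop) : Prop :=
  forall (I : Type) (U : I -> X -> Prop),
    (forall i, open_set (U i)) ->
    (forall x, K x -> exists i, U i x) ->
    exists l : list I, forall x, K x -> exists i, In i l /\ U i x.

Definition compact_space : Prop := compact_set (fun _ => True).

Definition diam : R := real (Lub_Rbar (fun r => exists x y : X, r = d x y)).

Definition dist (z : X) (A : X -> Prop) : R :=
  match excluded_middle_informative (exists a, A a) with
  | left _ => real (Glb_Rbar (fun r => exists a, A a /\ r = d z a))
  | right _ => diam
  end.

Definition is_flow (phi : R -> X -> X) : Prop :=
  (forall t x eps, 0 < eps -> exists delta, 0 < delta /\
      forall s y, Rabs (s - t) < delta -> d x y < delta ->
        d (phi t x) (phi s y) < eps) /\
  (forall x, phi 0 x = x) /\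
  (forall t s x, phi (t + s) x = phi t (phi s x)).

Variable phi : R -> X -> X.

Definition Sing (z : X) : Prop := forall t, phi t z = z.

Definition orbit (x : X) : X -> Prop := fun z => exists t, z = phi t x.

Definition periodic_point (x : X) : Prop :=
  ~ Sing x /\ exists t, 0 < t /\ phi t x = x.

Definition has_period (x : X) (T : R) : Prop :=
  0 < T /\ phi T x = x /\ forall t, 0 < t < T -> phi t x <> x.

Definition periodic_orbit (O : X -> Prop) : Prop :=
  exists x, periodic_point x /\ O = orbit x.

Definition periodic_orbit_period_le (t : R) (O : X -> Prop) : Prop :=
  exists x T, periodic_point x /\ has_period x T /\ 0 < T <= t /\ O = orbit x.

Definition countable_family (F : (X -> Prop) -> Prop) : Prop :=
  exists f : (X -> Prop) -> nat,
    forall O1 O2, F O1 -> F O2 -> f O1 = f O2 -> O1 = O2.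

Definition finite_family (F : (X -> Prop) -> Prop) : Prop :=
  exists l : list (X -> Prop), forall O, F O -> In O l.

Definition increasing_homeo (s : R -> R) : Prop :=
  (forall a b, a < b -> s a < s b) /\ continuity s /\
  exists g : R -> R, continuity g /\
    (forall t, g (s t) = t) /\ (forall t, s (g t) = t).

Definition singular_expansive : Prop :=
  forall eps, 0 < eps -> exists delta, 0 < delta /\
    forall (x y : X) (s : R -> R), increasing_homeo s ->
      (forall t, d (phi t x) (phi (s t) y) <= delta * dist (phi t x) Sing) ->
      exists t0 u, t0 - eps <= u <= t0 + eps /\ phi (s t0) y = phi u x.

Definition expansive_on (Lambda : X -> Prop) : Prop :=
  forall eps, 0 < eps -> exists delta, 0 < delta /\
    forall (x y : X) (s : R -> R), Lambda x -> Lambda y ->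
      continuity s -> s 0 = 0 ->
      (forall t, d (phi t x) (phi (s t) y) <= delta) ->
      exists u, - eps <= u <= eps /\ y = phi u x.

Definition expansive : Prop := expansive_on (fun _ => True).

Definition isolated_point (x : X) : Prop :=
  exists r, 0 < r /\ forall y, d x y < r -> y = x.

Definition invariant_set (K : X -> Prop) : Prop :=
  forall t z, K z <-> exists u, K u /\ z = phi t u.

Definition neighborhood (U K : X -> Prop) : Prop :=
  exists V, open_set V /\ (forall z, K z -> V z) /\ (forall z, V z -> U z).

Definition dynamically_isolated (K : X -> Prop) : Prop :=
  compact_set K /\ invariant_set K /\
  exists U, neighborhood U K /\
    forall z, K z <-> (forall t, exists u, U u /\ z = phi t u).

End Metric.

(* (1) Singular expansivity, applied to two periodic orbits run at proportional speeds, shows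
   that a periodic orbit is the only one having a point and a period close to its own (the scale
   depends on the distance of the orbit to [Sing]).  Coding each orbit by a point of a finite net
   and its rounded period therefore gives an injection into the naturals.
   (3) If [Sing] is dynamically isolated, periodic orbits of period at most [t] stay a uniform
   distance away from [Sing]; the scale is then uniform and the codes range over a finite set.
   (2) If the singularities are finitely many isolated points, the nonsingular set is compact:
   there are no arbitrarily short periods, and nonsingular points are uniformly displaced at
   times [r] with [mu <= |r| <= p0].  A continuous reparametrisation [s] along which [y] tracks
   [x] then advances at roughly unit speed, so it is close to an increasing homeomorphism, and
   singular expansivity puts [y] on the orbit of [x]; the displacement bound traps the time lag
   [s t + v - t] below [eps] by continuity. *)

From Pilot Require Import Defs.
From Stdlib Require Import Reals List Lra Lia ClassicalEpsilon Classical FunctionalExtensionality PropExtensionality.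
From Stdlib Require Cantor.
From Coquelicot Require Import Coquelicot.
Open Scope R_scope.

Lemma list_min_pos {A : Type} (f : A -> R) (l : list A) :
  (forall z, In z l -> 0 < f z) -> exists m, 0 < m /\ forall z, In z l -> m <= f z.
Proof.
  induction l as [|a l IH]; intros Hpos.
  - exists 1. split; [lra|]. intros z [].
  - destruct IH as [m [Hm Hmin]]; [intros z Hz; apply Hpos; right; exact Hz|].
    exists (Rmin m (f a)). split; [apply Rmin_pos; [exact Hm| apply Hpos; left; reflexivity]|].
    intros z [<-|Hz]; [apply Rmin_r|].
    eapply Rle_trans; [apply Rmin_l| apply Hmin; exact Hz].
Qed.

Lemma list_max_bound {A : Type} (f : A -> R) (l : list A) :
  exists M, forall z, In z l -> f z <= M.
Proof.
  induction l as [|a l [M HM]].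
  - exists 0. intros z [].
  - exists (Rmax M (f a)). intros z [<-|Hz]; [apply Rmax_r|].
    eapply Rle_trans; [apply HM; exact Hz| apply Rmax_l].
Qed.

Definition bucket (q a : R) : nat := Z.to_nat (Int_part (a * q)).

Lemma Int_part_nonneg r : 0 <= r -> (0 <= Int_part r)%Z.
Proof.
  intros Hr. destruct (base_Int_part r) as [_ H].
  assert (Hgt : IZR (Int_part r) > -1) by lra. apply lt_IZR in Hgt. lia.
Qed.

Lemma Int_part_le a b : a <= b -> (Int_part a <= Int_part b)%Z.
Proof.
  intros Hab. destruct (base_Int_part a) as [Ha _]. destruct (base_Int_part b) as [_ Hb].
  assert (Hlt : IZR (Int_part a) < IZR (Int_part b + 1)) by (rewrite plus_IZR; lra).
  apply lt_IZR in Hlt. lia.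
Qed.

Lemma bucket_le q a b : 0 <= q -> a <= b -> (bucket q a <= bucket q b)%nat.
Proof.
  intros Hq Hab. unfold bucket.
  pose proof (Int_part_le (a * q) (b * q) ltac:(nra)). lia.
Qed.

Lemma bucket_eq_close q a b : 0 < q -> 0 <= a -> 0 <= b ->
  bucket q a = bucket q b -> Rabs (a - b) < / q.
Proof.
  unfold bucket. intros Hq Ha Hb E.
  pose proof (Int_part_nonneg (a * q) ltac:(nra)).
  pose proof (Int_part_nonneg (b * q) ltac:(nra)).
  assert (E' : Int_part (a * q) = Int_part (b * q)) by lia.
  destruct (base_Int_part (a * q)), (base_Int_part (b * q)). rewrite E' in *.
  assert (Hq1 : Rabs ((a - b) * q) < 1) by (apply Rabs_def1; lra).
  rewrite Rabs_mult, (Rabs_right q) in Hq1 by lra.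
  apply Rmult_lt_reg_r with q; [exact Hq|]. rewrite Rinv_l by lra. exact Hq1.
Qed.

Lemma Rdiv_euclid_ex T s : 0 < T -> exists z r, 0 <= r < T /\ s = IZR z * T + r.
Proof.
  intros HT. exists (Int_part (s / T)), (s - IZR (Int_part (s / T)) * T).
  destruct (base_Int_part (s / T)) as [H1 H2]. split; [|ring].
  assert (E : s = s / T * T) by (field; lra).
  split.
  - apply Rmult_le_compat_r with (r := T) in H1; lra.
  - assert (H3 : IZR (Int_part (s / T)) > s / T - 1) by lra.
    apply Rmult_gt_compat_r with (r := T) in H3; [|lra].
    rewrite Rmult_minus_distr_r, <- E in H3. lra.
Qed.

Lemma continuity_of_lipschitz (f : R -> R) K : 0 < K ->
  (forall a b, Rabs (f a - f b) <= K * Rabs (a - b)) -> continuity f.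
Proof.
  intros HK Hf x. unfold continuity_pt, continue_in, limit1_in, limit_in. intros e He.
  exists (e / K). split; [apply Rdiv_lt_0_compat; lra|].
  intros y [_ Hy]. simpl in *. unfold R_dist in *.
  eapply Rle_lt_trans; [apply Hf|].
  apply Rmult_lt_compat_l with (r := K) in Hy; [|exact HK].
  replace (K * (e / K)) with e in Hy by (field; lra). exact Hy.
Qed.

Lemma ex_RInt_of_continuity (f : R -> R) a b : continuity f -> ex_RInt f a b.
Proof.
  intros Hf. apply (ex_RInt_continuous (V := R_CompleteNormedModule)). intros z _.
  apply (proj1 (continuity_pt_filterlim f z)). apply Hf.
Qed.

Lemma RInt_const_real (a b c : R) : RInt (fun _ => c) a b = (b - a) * c.
Proof. rewrite (RInt_const (V := R_CompleteNormedModule)). reflexivity. Qed.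

Lemma RInt_plus_const (f : R -> R) a b c :
  ex_RInt f a b -> RInt (fun u => f u + c) a b = RInt f a b + (b - a) * c.
Proof.
  intros H. transitivity (RInt (fun x => plus (f x) ((fun _ => c) x)) a b); [reflexivity|].
  rewrite (RInt_plus (V := R_CompleteNormedModule)); [|exact H| apply ex_RInt_const].
  rewrite RInt_const_real. reflexivity.
Qed.

Lemma RInt_shift (f : R -> R) a b h :
  ex_RInt f (a + h) (b + h) -> RInt (fun u => f (u + h)) a b = RInt f (a + h) (b + h).
Proof.
  intros H. pose proof (RInt_comp_lin f 1 h a b) as E. rewrite !Rmult_1_l in E.
  rewrite <- E by exact H. apply RInt_ext. intros x _.
  unfold scal; simpl. unfold mult; simpl. rewrite !Rmult_1_l. reflexivity.
Qed.

Lemma ivt_between (f : R -> R) a b c : continuity f -> a <= b ->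
  (f a - c) * (f b - c) <= 0 -> exists t, a <= t <= b /\ f t = c.
Proof.
  intros Hf Hab Hp.
  destruct (IVT_cor (fun u => f u - c) a b) as [t [Ht Ht']]; auto.
  - apply continuity_minus; [exact Hf| apply continuity_const; intros ? ?; reflexivity].
  - exists t. split; [exact Ht| lra].
Qed.

Lemma continuous_abs_gap (f : R -> R) a b t0 : continuity f -> a <= b ->
  (forall t, ~ (a <= Rabs (f t) <= b)) -> Rabs (f t0) < a -> forall t, Rabs (f t) < a.
Proof.
  intros Hf Hab Hgap H0 t.
  destruct (Rlt_le_dec (Rabs (f t)) a) as [Hl|Hl]; [exact Hl|]. exfalso.
  assert (Hc : exists c, Rabs c = a /\ (f t0 - c) * (f t - c) <= 0).
  { pose proof (Rabs_pos (f t0)). apply Rabs_def2 in H0.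
    destruct (Rle_dec 0 (f t)).
    - exists a. rewrite Rabs_right by lra. rewrite Rabs_right in Hl by lra. split; [reflexivity| nra].
    - exists (- a). rewrite Rabs_Ropp, Rabs_right by lra. rewrite Rabs_left in Hl by lra.
      split; [reflexivity| nra]. }
  destruct Hc as [c [Hca Hp]].
  destruct (Rle_dec t0 t) as [Ht|Ht].
  - destruct (ivt_between f t0 t c Hf Ht Hp) as [t' [_ Ht']].
    apply (Hgap t'). rewrite Ht'. lra.
  - destruct (ivt_between f t t0 c Hf ltac:(lra) ltac:(nra)) as [t' [_ Ht']].
    apply (Hgap t'). rewrite Ht'. lra.
Qed.

Lemma increasing_homeo_of_bilipschitz (f : R -> R) k K : 0 < k -> 0 < K ->
  (forall a b, a <= b -> k * (b - a) <= f b - f a <= K * (b - a)) -> increasing_homeo f.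
Proof.
  intros Hk HK Hf.
  assert (Habs : forall a b, k * Rabs (a - b) <= Rabs (f a - f b) <= K * Rabs (a - b)).
  { intros a b. destruct (Rle_dec a b) as [Hab|Hab].
    - pose proof (Hf a b Hab). assert (0 <= k * (b - a)) by (apply Rmult_le_pos; lra).
      rewrite (Rabs_left1 (a - b)), (Rabs_left1 (f a - f b)) by lra. lra.
    - pose proof (Hf b a ltac:(lra)). assert (0 <= k * (a - b)) by (apply Rmult_le_pos; lra).
      rewrite (Rabs_right (a - b)), (Rabs_right (f a - f b)) by lra. lra. }
  assert (Hcont : continuity f) by (apply (continuity_of_lipschitz f K HK); intros; apply Habs).
  assert (Hsurj : forall y, exists x, f x = y).
  { intros y. set (m := Rabs (y - f 0) / k).
    assert (Hkm : k * m = Rabs (y - f 0)) by (unfold m; field; lra).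
    assert (Hm : 0 <= m) by (pose proof (Rabs_pos (y - f 0)); nra).
    pose proof (Hf (- m) 0 ltac:(lra)). pose proof (Hf 0 m Hm).
    pose proof (Rle_abs (y - f 0)). pose proof (Rle_abs (- (y - f 0))). rewrite Rabs_Ropp in *.
    assert (f (- m) - y <= 0 /\ 0 <= f m - y) as [Hlo Hhi] by lra.
    destruct (ivt_between f (- m) m y Hcont ltac:(lra)) as [x [_ Hx]]; [nra|].
    exists x. exact Hx. }
  destruct (choice _ Hsurj) as [g Hg].
  assert (Hg_inj : forall t, g (f t) = t).
  { intros t. pose proof (Habs (g (f t)) t) as [H _]. rewrite Hg, Rminus_diag, Rabs_R0 in H.
    pose proof (Rabs_pos (g (f t) - t)).
    assert (Rabs (g (f t) - t) = 0) by nra. apply Rabs_eq_0 in H1. lra. }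
  split; [|split; [exact Hcont|]].
  - intros a b Hab. pose proof (Hf a b ltac:(lra)). nra.
  - exists g. split; [|split; [exact Hg_inj| exact Hg]].
    apply (continuity_of_lipschitz g (/ k)); [apply Rinv_0_lt_compat; exact Hk|].
    intros a b. pose proof (Habs (g a) (g b)) as [H _]. rewrite !Hg in H.
    apply Rmult_le_reg_l with k; [exact Hk|]. rewrite <- Rmult_assoc, Rinv_r, Rmult_1_l by lra. exact H.
Qed.

Lemma increasing_homeo_scale a : 0 < a -> increasing_homeo (fun t => t * a).
Proof.
  intros Ha. apply (increasing_homeo_of_bilipschitz _ a a Ha Ha). intros u v _. lra.
Qed.

Section WindowAverage.
Variables (s : R -> R) (h : R).
Hypothesis s_cont : continuity s.
Hypothesis h_pos : 0 < h.

Definition window_average (sg : R) : R := RInt s sg (sg + h) / h.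

Lemma window_average_increment :
  (forall sg, Rabs (s (sg + h) - s sg - h) < h / 2) ->
  forall a b, a <= b -> 1 / 2 * (b - a) <= window_average b - window_average a <= 3 / 2 * (b - a).
Proof.
  intros Hinc a b Hab.
  assert (Hex : forall u v, ex_RInt s u v) by (intros; apply ex_RInt_of_continuity, s_cont).
  assert (Hsh : continuity (fun u => s (u + h))).
  { apply (continuity_comp (fun u => u + h) s); [|exact s_cont].
    apply continuity_plus; [apply derivable_continuous, derivable_id|].
    apply continuity_const; intros ? ?; reflexivity. }
  assert (Hsc : forall c, continuity (fun u => s u + c)).
  { intros c. apply continuity_plus; [exact s_cont|]. apply continuity_const; intros ? ?; reflexivity. }
  (* the average moves by the integral of [s (u + h) - s u], which lies between [h/2] and [3h/2] *)
  assert (E : window_average b - window_average a = (RInt (fun u => s (u + h)) a b - RInt s a b) / h).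
  { unfold window_average. rewrite RInt_shift by apply Hex.
    pose proof (RInt_Chasles s a (a + h) (b + h) (Hex _ _) (Hex _ _)).
    pose proof (RInt_Chasles s a b (b + h) (Hex _ _) (Hex _ _)).
    change (plus ?x ?y) with (x + y) in *.
    unfold Rdiv. rewrite <- Rmult_minus_distr_r. f_equal. lra. }
  assert (L : RInt (fun u => s u + h / 2) a b <= RInt (fun u => s (u + h)) a b).
  { apply RInt_le; [exact Hab| apply ex_RInt_of_continuity, Hsc| apply ex_RInt_of_continuity, Hsh|].
    intros x _. pose proof (Hinc x) as H0. apply Rabs_def2 in H0. lra. }
  assert (U : RInt (fun u => s (u + h)) a b <= RInt (fun u => s u + 3 * h / 2) a b).
  { apply RInt_le; [exact Hab| apply ex_RInt_of_continuity, Hsh| apply ex_RInt_of_continuity, Hsc|].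
    intros x _. pose proof (Hinc x) as H0. apply Rabs_def2 in H0. lra. }
  rewrite !RInt_plus_const in L, U by apply Hex.
  rewrite E. set (D := RInt (fun u => s (u + h)) a b - RInt s a b).
  assert (Dh : D / h * h = D) by (field; lra).
  assert (HD : (b - a) * (h / 2) <= D <= (b - a) * (3 * h / 2)) by (unfold D; lra).
  set (q := D / h) in *. split; nra.
Qed.

Lemma window_average_close mu :
  (forall sg sg', sg <= sg' <= sg + h -> Rabs (s sg' - s sg) < mu) ->
  forall sg, Rabs (window_average sg - s sg) <= mu.
Proof.
  intros Hosc sg. unfold window_average.
  assert (Hex : ex_RInt s sg (sg + h)) by apply ex_RInt_of_continuity, s_cont.
  assert (L : RInt (fun _ => s sg - mu) sg (sg + h) <= RInt s sg (sg + h)).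
  { apply RInt_le; [lra| apply ex_RInt_const| exact Hex|].
    intros x Hx. pose proof (Hosc sg x ltac:(lra)) as H0. apply Rabs_def2 in H0. lra. }
  assert (U : RInt s sg (sg + h) <= RInt (fun _ => s sg + mu) sg (sg + h)).
  { apply RInt_le; [lra| exact Hex| apply ex_RInt_const|].
    intros x Hx. pose proof (Hosc sg x ltac:(lra)) as H0. apply Rabs_def2 in H0. lra. }
  rewrite !RInt_const_real in L, U. replace (sg + h - sg) with h in L, U by ring.
  replace (RInt s sg (sg + h) / h - s sg) with ((RInt s sg (sg + h) - h * s sg) / h) by (field; lra).
  rewrite Rabs_div, (Rabs_right h) by lra.
  apply Rmult_le_reg_r with h; [exact h_pos|].
  unfold Rdiv. rewrite Rmult_assoc, Rinv_l, Rmult_1_r by lra.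
  apply Rabs_le. nra.
Qed.

End WindowAverage.

(* The homeomorphism is the moving average of [s] over windows of length [h]. *)
Lemma increasing_homeo_near (s : R -> R) h mu : continuity s -> 0 < h ->
  (forall sg, Rabs (s (sg + h) - s sg - h) < h / 2) ->
  (forall sg sg', sg <= sg' <= sg + h -> Rabs (s sg' - s sg) < mu) ->
  exists H, increasing_homeo H /\ forall sg, Rabs (H sg - s sg) <= mu.
Proof.
  intros Hs Hh Hinc Hosc. exists (window_average s h). split.
  - apply (increasing_homeo_of_bilipschitz _ (1 / 2) (3 / 2)); [lra| lra|].
    exact (window_average_increment s h Hs Hh Hinc).
  - exact (window_average_close s h Hs Hh mu Hosc).
Qed.

Section MetricSpaceFacts.
Variable X : MetricSpace.

Lemma d_refl (x : X) : d x x = 0.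
Proof. apply d_eq0. reflexivity. Qed.

Lemma d_pos_of_neq (x y : X) : x <> y -> 0 < d x y.
Proof.
  intros Hxy. destruct (d_nonneg X x y) as [H|H]; [exact H|].
  exfalso. apply Hxy. apply d_eq0. symmetry. exact H.
Qed.

Lemma ball_open (z : X) r : Defs.open_set X (fun w => d z w < r).
Proof.
  intros x Hx. exists (r - d z x). split; [lra|].
  intros y Hy. pose proof (d_triangle X z x y). lra.
Qed.

Lemma finite_ball_cover (K : X -> Prop) (rad : X -> R) :
  compact_set X K -> (forall x, 0 < rad x) ->
  exists l, forall y, K y -> exists z, In z l /\ K z /\ d z y < rad z.
Proof.
  intros HK Hr.
  destruct (HK X (fun z w => K z /\ d z w < rad z)) as [l Hl].
  - intros z w [Kz Hw]. destruct (ball_open z (rad z) w Hw) as [e [He Hb]].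
    exists e. split; [exact He|]. intros y Hy. split; [exact Kz| exact (Hb y Hy)].
  - intros x Kx. exists x. split; [exact Kx|]. rewrite d_refl. apply Hr.
  - exists l. intros y Ky. destruct (Hl y Ky) as [z [Hz [Kz Hzy]]]. exists z. auto.
Qed.

Lemma lebesgue_number (K : X -> Prop) (rad : X -> R) :
  compact_set X K -> (forall x, 0 < rad x) ->
  exists e, 0 < e /\ forall y, K y ->
    exists z, K z /\ e <= rad z /\ forall w, d y w < e -> d z w < rad z.
Proof.
  intros HK Hr.
  destruct (finite_ball_cover K (fun x => rad x / 2) HK) as [l Hl].
  { intros x. specialize (Hr x). lra. }
  destruct (list_min_pos (fun x => rad x / 2) l) as [e [He Hmin]].
  { intros z _. specialize (Hr z). lra. }
  exists e. split; [exact He|]. intros y Ky.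
  destruct (Hl y Ky) as [z [Hz [Kz Hzy]]]. specialize (Hmin z Hz). simpl in *.
  exists z. split; [exact Kz|]. split; [specialize (Hr z); lra|].
  intros w Hw. pose proof (d_triangle X z y w). lra.
Qed.

Lemma compact_bounded : compact_space X -> exists B, forall a b : X, d a b <= B.
Proof.
  intros Hc. destruct (finite_ball_cover (fun _ => True) (fun _ => 1) Hc) as [l Hl]; [intros; lra|].
  destruct (list_max_bound (fun p : X * X => d (fst p) (snd p)) (list_prod l l)) as [M HM].
  exists (M + 2). intros a b.
  destruct (Hl a I) as [za [Ha [_ Ha']]]. destruct (Hl b I) as [zb [Hb [_ Hb']]].
  pose proof (HM (za, zb) (in_prod _ _ _ _ Ha Hb)). simpl in *.
  pose proof (d_triangle X a za b). pose proof (d_triangle X za zb b).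
  rewrite d_sym in Ha'. lra.
Qed.

Lemma d_le_diam : compact_space X -> forall a b : X, d a b <= diam X.
Proof.
  intros Hc a b. destruct (compact_bounded Hc) as [B HB]. unfold diam.
  set (D := fun r => exists x y : X, r = d x y).
  destruct (Lub_Rbar_correct D) as [Hub Hlub].
  assert (H1 : Rbar_le (d a b) (Lub_Rbar D)) by (apply Hub; exists a, b; reflexivity).
  assert (H2 : Rbar_le (Lub_Rbar D) B) by (apply Hlub; intros r [x [y ->]]; apply HB).
  destruct (Lub_Rbar D); simpl in *; tauto.
Qed.

Lemma diam_pos_of_neq (x y : X) : compact_space X -> x <> y -> 0 < diam X.
Proof.
  intros Hc Hxy. pose proof (d_pos_of_neq x y Hxy). pose proof (d_le_diam Hc x y). lra.
Qed.

(* [dist] is [diam X] on the empty set, hence the [Rmin]. *)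
Lemma dist_ge_of_far (A : X -> Prop) rho (w : X) :
  (forall a, A a -> rho <= d w a) -> Rmin rho (diam X) <= Defs.dist X w A.
Proof.
  intros Hfar. unfold Defs.dist.
  destruct (excluded_middle_informative (exists a, A a)) as [[a Ha]|_]; [|apply Rmin_r].
  set (D := fun r => exists a, A a /\ r = d w a).
  destruct (Glb_Rbar_correct D) as [Hlb Hglb].
  assert (H1 : Rbar_le (Glb_Rbar D) (d w a)) by (apply Hlb; exists a; split; auto).
  assert (H2 : Rbar_le rho (Glb_Rbar D)) by (apply Hglb; intros r [b [Hb ->]]; apply Hfar, Hb).
  destruct (Glb_Rbar D); simpl in *; try tauto.
  eapply Rle_trans; [apply Rmin_l| exact H2].
Qed.

Lemma countable_family_of_code (F : (X -> Prop) -> Prop) (Code : (X -> Prop) -> nat -> Prop) :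
  (forall O, F O -> exists n, Code O n) ->
  (forall O O' n, Code O n -> Code O' n -> O = O') -> countable_family X F.
Proof.
  intros Hex Huniq.
  assert (Hch : forall O, exists n, F O -> Code O n).
  { intros O. destruct (classic (F O)) as [HO|HO].
    - destruct (Hex O HO) as [n Hn]. exists n. intros _. exact Hn.
    - exists 0%nat. intros H. contradiction. }
  destruct (choice _ Hch) as [code Hcode].
  exists code. intros O1 O2 H1 H2 E.
  apply (Huniq _ _ (code O1)); [apply Hcode, H1| rewrite E; apply Hcode, H2].
Qed.

Lemma finite_family_of_code {C : Type} (F : (X -> Prop) -> Prop) (Code : (X -> Prop) -> C -> Prop)
  (l : list C) :
  (forall O, F O -> exists c, In c l /\ Code O c) ->
  (forall O O' c, Code O c -> Code O' c -> O = O') -> finite_family X F.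
Proof.
  intros Hex Huniq.
  set (decode := fun c => epsilon (inhabits (fun _ : X => False)) (fun O => Code O c)).
  exists (map decode l). intros O HO.
  destruct (Hex O HO) as [c [Hc HOc]].
  apply in_map_iff. exists c. split; [|exact Hc].
  apply (Huniq _ _ c); [|exact HOc].
  apply (epsilon_spec (inhabits (fun _ : X => False)) (fun O => Code O c)). exists O. exact HOc.
Qed.

End MetricSpaceFacts.

Section Flow.
Variables (X : MetricSpace) (phi : R -> X -> X).
Hypothesis X_compact : compact_space X.
Hypothesis phi_flow : is_flow X phi.

Lemma phi_0 x : phi 0 x = x.
Proof. apply phi_flow. Qed.

Lemma phi_add t s x : phi (t + s) x = phi t (phi s x).
Proof. apply phi_flow. Qed.

Lemma phi_opp_l t x : phi (- t) (phi t x) = x.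
Proof. rewrite <- phi_add. replace (- t + t) with 0 by ring. apply phi_0. Qed.

Lemma phi_continuous t x eps : 0 < eps -> exists delta, 0 < delta /\
  forall s y, Rabs (s - t) < delta -> d x y < delta -> d (phi t x) (phi s y) < eps.
Proof. apply phi_flow. Qed.

Lemma flow_small_time_uniform eps : 0 < eps ->
  exists eta, 0 < eta /\ forall t y, Rabs t < eta -> d y (phi t y) < eps.
Proof.
  intros He.
  assert (Hloc : forall x, exists r, 0 < r /\
    forall s y, Rabs s < r -> d x y < r -> d x (phi s y) < eps / 2).
  { intros x. destruct (phi_continuous 0 x (eps / 2)) as [r [Hr Hc]]; [lra|].
    exists r. split; [exact Hr|]. intros s y Hs Hy. rewrite <- (phi_0 x) at 1.
    apply Hc; [rewrite Rminus_0_r; exact Hs| exact Hy]. }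
  destruct (choice _ Hloc) as [rad Hrad].
  destruct (lebesgue_number X (fun _ => True) rad X_compact) as [e [He' Hleb]]; [apply Hrad|].
  exists e. split; [exact He'|]. intros t y Ht.
  destruct (Hleb y I) as [z [_ [Hez Hz]]].
  assert (Hzy : d z y < rad z) by (apply Hz; rewrite d_refl; exact He').
  assert (A1 : d z (phi t y) < eps / 2) by (apply Hrad; lra).
  assert (A2 : d z (phi 0 y) < eps / 2) by (apply Hrad; [rewrite Rabs_R0; apply Hrad| exact Hzy]).
  rewrite phi_0, d_sym in A2. pose proof (d_triangle X y z (phi t y)). lra.
Qed.

Lemma flow_time_map_uniform t eps : 0 < eps ->
  exists eta, 0 < eta /\ forall y y', d y y' < eta -> d (phi t y) (phi t y') < eps.
Proof.
  intros He.
  assert (Hloc : forall x, exists r, 0 < r /\ forall y, d x y < r -> d (phi t x) (phi t y) < eps / 2).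
  { intros x. destruct (phi_continuous t x (eps / 2)) as [r [Hr Hc]]; [lra|].
    exists r. split; [exact Hr|]. intros y Hy. apply Hc; [|exact Hy].
    rewrite Rminus_diag, Rabs_R0. exact Hr. }
  destruct (choice _ Hloc) as [rad Hrad].
  destruct (lebesgue_number X (fun _ => True) rad X_compact) as [e [He' Hleb]]; [apply Hrad|].
  exists e. split; [exact He'|]. intros y y' Hyy.
  destruct (Hleb y I) as [z [_ [_ Hz]]].
  pose proof (proj2 (Hrad z) y (Hz y ltac:(rewrite d_refl; exact He'))) as A1.
  pose proof (proj2 (Hrad z) y' (Hz y' Hyy)) as A2.
  rewrite d_sym in A1. pose proof (d_triangle X (phi t y) (phi t z) (phi t y')). lra.
Qed.

Lemma flow_equicontinuous_on_bounded_times T eps : 0 < eps -> exists eta, 0 < eta /\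
  forall r y y', 0 <= r <= T -> d y y' < eta -> d (phi r y) (phi r y') < eps.
Proof.
  intros He.
  assert (Hstep : exists h, 0 < h /\
    forall t a b, 0 <= t <= h -> d a b < h -> d (phi t a) (phi t b) < eps).
  { destruct (flow_small_time_uniform (eps / 3)) as [e [He1 Hsmall]]; [lra|].
    exists (Rmin (e / 2) (eps / 3)). split; [apply Rmin_pos; lra|].
    intros t a b Ht Hab. pose proof (Rmin_l (e / 2) (eps / 3)). pose proof (Rmin_r (e / 2) (eps / 3)).
    pose proof (Hsmall t a ltac:(rewrite Rabs_right; lra)).
    pose proof (Hsmall t b ltac:(rewrite Rabs_right; lra)).
    pose proof (d_triangle X (phi t a) a (phi t b)). pose proof (d_triangle X a b (phi t b)).
    rewrite (d_sym X (phi t a) a) in *. lra. }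
  destruct Hstep as [h [Hh Hstep]].
  assert (Hn : forall n : nat, exists eta, 0 < eta /\
    forall r y y', 0 <= r <= INR n * h -> d y y' < eta -> d (phi r y) (phi r y') < eps).
  { induction n as [|n [e1 [He1 IH]]].
    - exists eps. split; [exact He|]. intros r y y' Hr Hy. simpl in Hr.
      replace r with 0 by lra. rewrite !phi_0. exact Hy.
    - destruct (flow_time_map_uniform (INR n * h) h Hh) as [e2 [He2 Hu]].
      exists (Rmin e1 e2). split; [apply Rmin_pos; lra|].
      intros r y y' Hr Hy. pose proof (Rmin_l e1 e2). pose proof (Rmin_r e1 e2).
      destruct (Rle_dec r (INR n * h)) as [Hle|Hgt]; [apply IH; lra|].
      rewrite S_INR in Hr. replace r with (r - INR n * h + INR n * h) by ring. rewrite !phi_add.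
      apply Hstep; [lra|]. apply Hu. lra. }
  destruct (INR_archimed h T Hh) as [n Hnh].
  destruct (Hn n) as [eta [Heta HQ]].
  exists eta. split; [exact Heta|]. intros r y y' Hr Hy. apply HQ; [lra| exact Hy].
Qed.

Lemma flow_rescaled_close Tm eps : 0 < eps -> exists r, 0 < r /\
  forall (x x' : X) T T', 0 < T <= Tm -> d x x' < r -> Rabs (T' - T) < r ->
  forall s, 0 <= s <= T -> d (phi s x) (phi (s * (T' / T)) x') < eps.
Proof.
  intros He. destruct (flow_equicontinuous_on_bounded_times Tm (eps / 2)) as [e1 [He1 H1]]; [lra|].
  destruct (flow_small_time_uniform (eps / 2)) as [e2 [He2 H2]]; [lra|].
  exists (Rmin e1 e2). split; [apply Rmin_pos; lra|].
  intros x x' T T' HT Hx HTT s Hs.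
  pose proof (Rmin_l e1 e2). pose proof (Rmin_r e1 e2).
  assert (A1 : d (phi s x) (phi s x') < eps / 2) by (apply H1; lra).
  assert (A2 : d (phi s x') (phi (s * (T' / T)) x') < eps / 2).
  { replace (s * (T' / T)) with (s * (T' / T) - s + s) by ring. rewrite phi_add. apply H2.
    replace (s * (T' / T) - s) with (s / T * (T' - T)) by (field; lra).
    assert (Hq : 0 <= s / T <= 1).
    { split; [apply Rdiv_le_0_compat; lra|].
      apply Rmult_le_reg_r with T; [lra|]. unfold Rdiv. rewrite Rmult_assoc, Rinv_l; lra. }
    rewrite Rabs_mult, (Rabs_right (s / T)) by lra.
    pose proof (Rabs_pos (T' - T)). nra. }
  pose proof (d_triangle X (phi s x) (phi s x') (phi (s * (T' / T)) x')). lra.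
Qed.

Lemma phi_periodic_nat T x n : phi T x = x -> phi (INR n * T) x = x.
Proof.
  intros HT. induction n as [|n IH]; [simpl; rewrite Rmult_0_l; apply phi_0|].
  rewrite S_INR. replace ((INR n + 1) * T) with (T + INR n * T) by ring.
  rewrite phi_add, IH. exact HT.
Qed.

Lemma phi_periodic_Z T x z : phi T x = x -> phi (IZR z * T) x = x.
Proof.
  intros HT. destruct (Z.le_gt_cases 0 z) as [Hz|Hz].
  - rewrite <- (Znat.Z2Nat.id z Hz), <- INR_IZR_INZ. apply phi_periodic_nat, HT.
  - replace z with (- Z.of_nat (Z.to_nat (- z)))%Z by lia.
    rewrite opp_IZR, <- INR_IZR_INZ, Ropp_mult_distr_l_reverse.
    rewrite <- (phi_periodic_nat T x (Z.to_nat (- z)) HT) at 1. apply phi_opp_l.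
Qed.

Lemma phi_periodic_shift T x z r : phi T x = x -> phi (IZR z * T + r) x = phi r x.
Proof. intros HT. rewrite Rplus_comm, phi_add, phi_periodic_Z; auto. Qed.

Lemma phi_periodic_reduce T x s : 0 < T -> phi T x = x ->
  exists r, 0 <= r < T /\ phi s x = phi r x.
Proof.
  intros HT Hx. destruct (Rdiv_euclid_ex T s HT) as [z [r [Hr ->]]].
  exists r. split; [exact Hr| apply phi_periodic_shift, Hx].
Qed.

Lemma phi_periodic_along T x s : phi T x = x -> phi T (phi s x) = phi s x.
Proof. intros H. rewrite <- phi_add, Rplus_comm, phi_add, H. reflexivity. Qed.

Lemma orbit_phi x v : orbit X phi (phi v x) = orbit X phi x.
Proof.
  apply functional_extensionality. intro z. apply propositional_extensionality.
  split; intros [t ->].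
  - exists (t + v). symmetry. apply phi_add.
  - exists (t - v). rewrite <- phi_add. f_equal. ring.
Qed.

Lemma Sing_of_phi z s : Sing X phi (phi s z) -> Sing X phi z.
Proof.
  intros H t. rewrite <- (phi_opp_l s z), <- phi_add.
  replace (t + - s) with (- s + t) by ring. rewrite phi_add, H. reflexivity.
Qed.

Lemma nonsingular_moves z : ~ Sing X phi z -> exists t, 0 < d z (phi t z).
Proof.
  intros Hz. apply not_all_ex_not in Hz. destruct Hz as [t Ht].
  exists t. apply d_pos_of_neq. intros E. apply Ht. symmetry. exact E.
Qed.

Lemma diam_pos_of_nonsingular z : ~ Sing X phi z -> 0 < diam X.
Proof.
  intros Hz. apply not_all_ex_not in Hz. destruct Hz as [t Ht].
  apply (diam_pos_of_neq X z (phi t z) X_compact). intros E. apply Ht. symmetry. exact E.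
Qed.

(* Every point of the orbit is [phi r] of the close point for some [r] in [[0, T]]. *)
Lemma periodic_orbit_stays_near_Sing T eps : 0 < eps -> exists rho, 0 < rho /\
  forall x T' sg, 0 < T' <= T -> phi T' x = x -> Sing X phi sg ->
  forall s, d (phi s x) sg < rho -> forall s', d (phi s' x) sg < eps.
Proof.
  intros He. destruct (flow_equicontinuous_on_bounded_times T eps He) as [rho [Hr Heq]].
  exists rho. split; [exact Hr|]. intros x T' sg HT Hx Hsg s Hd s'.
  destruct (phi_periodic_reduce T' (phi s x) (s' - s) ltac:(lra) (phi_periodic_along T' x s Hx))
    as [r [Hr' E]].
  replace s' with (s' - s + s) by ring. rewrite phi_add, E, <- (Hsg r). apply Heq; [lra| exact Hd].
Qed.

Lemma periodic_orbit_dist_Sing_pos x T : 0 < T -> phi T x = x -> ~ Sing X phi x ->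
  exists c, 0 < c /\ forall s, c <= Defs.dist X (phi s x) (Sing X phi).
Proof.
  intros HT Hx Hn. destruct (nonsingular_moves x Hn) as [t1 Ht1].
  set (nu := d x (phi t1 x)) in *.
  destruct (periodic_orbit_stays_near_Sing T (nu / 2)) as [rho [Hr Hnear]]; [lra|].
  exists (Rmin rho (diam X)). split; [apply Rmin_pos; [exact Hr| exact (diam_pos_of_nonsingular x Hn)]|].
  intros s. apply dist_ge_of_far. intros sg Hsg.
  destruct (Rlt_le_dec (d (phi s x) sg) rho) as [Hl|Hl]; [exfalso|exact Hl].
  pose proof (Hnear x T sg ltac:(lra) Hx Hsg s Hl) as Hall.
  pose proof (Hall 0) as B0. pose proof (Hall t1) as B1. rewrite phi_0 in B0.
  pose proof (d_triangle X x sg (phi t1 x)). rewrite (d_sym X sg (phi t1 x)) in *. unfold nu in *. lra.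
Qed.

Hypothesis phi_sexp : singular_expansive X phi.

(* Singular expansivity applied with the linear reparametrisation [t * (T' / T)]. *)
Lemma periodic_orbit_eq_of_shadowing : exists del, 0 < del /\
  forall (x x' : X) T T' c, 0 < T -> 0 < T' -> phi T x = x -> phi T' x' = x' ->
  (forall s, c <= Defs.dist X (phi s x) (Sing X phi)) ->
  (forall s, 0 <= s < T -> d (phi s x) (phi (s * (T' / T)) x') <= del * c) ->
  orbit X phi x' = orbit X phi x.
Proof.
  destruct (phi_sexp 1) as [del [Hdel Hse]]; [lra|].
  exists del. split; [exact Hdel|].
  intros x x' T T' c HT HT' Hx Hx' Hc Hclose.
  destruct (Hse x x' _ (increasing_homeo_scale (T' / T) ltac:(apply Rdiv_lt_0_compat; lra)))
    as [t0 [u [_ Hu]]].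
  - intros t. destruct (Rdiv_euclid_ex T t HT) as [z [r [Hr Ht]]].
    assert (E1 : phi t x = phi r x) by (rewrite Ht; apply phi_periodic_shift, Hx).
    assert (E2 : t * (T' / T) = IZR z * T' + r * (T' / T)) by (rewrite Ht; field; lra).
    rewrite E2, phi_periodic_shift, E1 by exact Hx'.
    eapply Rle_trans; [apply Hclose, Hr|]. apply Rmult_le_compat_l; [lra|].
    rewrite <- E1. apply Hc.
  - rewrite <- (orbit_phi x (- (t0 * (T' / T)) + u)), phi_add, <- Hu, phi_opp_l. reflexivity.
Qed.

Definition orbit_locally_unique (r : R) (x : X) (T : R) : Prop :=
  forall x' T', 0 < T' -> phi T' x' = x' -> d x x' < r -> Rabs (T' - T) < r ->
  orbit X phi x' = orbit X phi x.

Lemma orbit_locally_unique_mono r r' x T :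
  r' <= r -> orbit_locally_unique r x T -> orbit_locally_unique r' x T.
Proof. intros Hr Hloc x' T' HT' Hx' Hd HTT. apply (Hloc x' T'); auto; lra. Qed.

Lemma periodic_orbit_locally_unique Tm c : 0 < c -> exists r, 0 < r /\
  forall x T, 0 < T <= Tm -> phi T x = x ->
  (forall s, c <= Defs.dist X (phi s x) (Sing X phi)) -> orbit_locally_unique r x T.
Proof.
  intros Hc. destruct periodic_orbit_eq_of_shadowing as [del [Hdel Hshadow]].
  destruct (flow_rescaled_close Tm (del * c)) as [r [Hr Hclose]]; [apply Rmult_lt_0_compat; lra|].
  exists r. split; [exact Hr|]. intros x T HT Hx Hdist x' T' HT' Hx' Hd HTT.
  apply (Hshadow x x' T T' c); try lra; auto.
  intros s Hs. left. apply (Hclose x x' T T'); auto; lra.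
Qed.

(* A periodic orbit is coded by a point [z] of an [r/2]-net near one of its points [x] and by
   the bucket of length [r/2] containing its period. *)
Definition periodic_code (r : R) (O : X -> Prop) (z : X) (k : nat) : Prop :=
  exists x T, O = orbit X phi x /\ 0 < T /\ phi T x = x /\ orbit_locally_unique r x T /\
    d z x < r / 2 /\ k = bucket (2 / r) T.

Lemma periodic_code_inj r O O' z k : 0 < r ->
  periodic_code r O z k -> periodic_code r O' z k -> O = O'.
Proof.
  intros Hr [x [T [-> [HT [Hx [Hloc [Hz Hk]]]]]]] [x' [T' [-> [HT' [Hx' [_ [Hz' Hk']]]]]]].
  symmetry. apply (Hloc x' T' HT' Hx').
  - pose proof (d_triangle X x z x'). rewrite d_sym in Hz. lra.
  - pose proof (bucket_eq_close (2 / r) T' T ltac:(apply Rdiv_lt_0_compat; lra) ltac:(lra)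
      ltac:(lra) ltac:(congruence)).
    replace (/ (2 / r)) with (r / 2) in * by (field; lra). lra.
Qed.

Lemma periodic_orbits_countable : countable_family X (periodic_orbit X phi).
Proof.
  assert (Hnet : forall n : nat, exists l : list X,
    forall y, True -> exists z, In z l /\ True /\ d z y < / INR (S n) / 2).
  { intros n. apply (finite_ball_cover X (fun _ => True) (fun _ => / INR (S n) / 2) X_compact).
    intros _. pose proof (lt_0_INR (S n) ltac:(lia)). apply Rdiv_lt_0_compat; [|lra].
    apply Rinv_0_lt_compat; lra. }
  destruct (choice _ Hnet) as [net Hnet'].
  apply countable_family_of_code with (Code := fun O c =>
    let '(n, ik) := Cantor.of_nat c in let '(i, k) := Cantor.of_nat ik in
    exists z, nth_error (net n) i = Some z /\ periodic_code (/ INR (S n)) O z k).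
  - intros O [x [[Hn [T [HT Hx]]] ->]].
    destruct (periodic_orbit_dist_Sing_pos x T HT Hx Hn) as [c [Hc Hdist]].
    destruct (periodic_orbit_locally_unique T c Hc) as [r [Hr Hloc]].
    destruct (archimed_cor1 r Hr) as [[|n] [Hn_r Hn_pos]]; [lia|].
    destruct (Hnet' n x I) as [z [Hz [_ Hzx]]].
    destruct (In_nth_error _ _ Hz) as [i Hi].
    exists (Cantor.to_nat (n, Cantor.to_nat (i, bucket (2 / / INR (S n)) T))).
    rewrite !Cantor.cancel_of_to. exists z. split; [exact Hi|].
    exists x, T. repeat split; auto.
    apply (orbit_locally_unique_mono r); [lra| apply Hloc; auto; lra].
  - intros O O' c. destruct (Cantor.of_nat c) as [n ik]. destruct (Cantor.of_nat ik) as [i k].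
    intros [z [Hz HO]] [z' [Hz' HO']]. rewrite Hz in Hz'. injection Hz' as <-.
    apply (periodic_code_inj (/ INR (S n)) O O' z k); auto.
    apply Rinv_0_lt_compat, lt_0_INR. lia.
Qed.

(* An orbit of period at most [t] coming close to [Sing] stays in its isolating neighbourhood,
   hence lies in [Sing]. *)
Lemma short_periodic_orbits_far_from_Sing : dynamically_isolated X phi (Sing X phi) ->
  forall t, 0 < t -> exists rho, 0 < rho /\ forall x T, ~ Sing X phi x -> 0 < T <= t ->
  phi T x = x -> forall s sg, Sing X phi sg -> rho <= d (phi s x) sg.
Proof.
  intros [HK [_ [U [[V [HV [HSV HVU]]] Hmax]]]] t Ht.
  assert (Hrad : forall z, exists r, 0 < r /\ (Sing X phi z -> forall w, d z w < r -> V w)).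
  { intros z. destruct (classic (Sing X phi z)) as [Hz|Hz].
    - destruct (HV z (HSV z Hz)) as [r [Hr Hb]]. exists r. auto.
    - exists 1. split; [lra| contradiction]. }
  destruct (choice _ Hrad) as [rad Hrad'].
  destruct (lebesgue_number X (Sing X phi) rad HK) as [e [He Hleb]]; [apply Hrad'|].
  destruct (periodic_orbit_stays_near_Sing t e He) as [rho [Hrho Hnear]].
  exists rho. split; [exact Hrho|]. intros x T Hn HT Hx s sg Hsg.
  destruct (Rlt_le_dec (d (phi s x) sg) rho) as [Hl|Hl]; [exfalso|exact Hl].
  apply Hn, Hmax. intros t'. exists (phi (- t') x). split.
  - destruct (Hleb sg Hsg) as [z [Hz [_ Hball]]]. apply HVU, (proj2 (Hrad' z) Hz), Hball.
    rewrite d_sym. exact (Hnear x T sg HT Hx Hsg s Hl (- t')).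
  - rewrite <- phi_add. replace (t' + - t') with 0 by ring. symmetry. apply phi_0.
Qed.

Lemma short_periodic_orbits_finite : dynamically_isolated X phi (Sing X phi) ->
  forall t, 0 < t -> finite_family X (periodic_orbit_period_le X phi t).
Proof.
  intros Hiso t Ht.
  destruct (short_periodic_orbits_far_from_Sing Hiso t Ht) as [rho [Hrho Hfar]].
  destruct (classic (exists z, ~ Sing X phi z)) as [[z0 Hz0]|Hnone].
  2:{ exists nil. intros O [x [T [[Hn _] _]]]. exfalso. apply Hnone. exists x. exact Hn. }
  set (c := Rmin rho (diam X)).
  assert (Hc : 0 < c) by (apply Rmin_pos; [exact Hrho| exact (diam_pos_of_nonsingular z0 Hz0)]).
  destruct (periodic_orbit_locally_unique t c Hc) as [r [Hr Hloc]].
  destruct (finite_ball_cover X (fun _ => True) (fun _ => r / 2) X_compact) as [l Hl]; [intros; lra|].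
  apply finite_family_of_code with (Code := fun O zk => periodic_code r O (fst zk) (snd zk))
    (l := list_prod l (seq 0 (S (bucket (2 / r) t)))).
  - intros O [x [T [[Hn _] [[HT [Hx _]] [HTt ->]]]]].
    destruct (Hl x I) as [z [Hz [_ Hzx]]].
    exists (z, bucket (2 / r) T). split.
    + apply in_prod; [exact Hz|]. apply in_seq.
      pose proof (bucket_le (2 / r) T t ltac:(apply Rlt_le, Rdiv_lt_0_compat; lra) ltac:(lra)). lia.
    + exists x, T. do 3 (split; [auto|]). split; [|split; [exact Hzx| reflexivity]].
      apply Hloc; [lra| exact Hx|]. intros s. apply dist_ge_of_far. intros sg Hsg.
      exact (Hfar x T Hn ltac:(lra) Hx s sg Hsg).
  - intros O O' [z k]. apply periodic_code_inj, Hr.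
Qed.

Lemma isolated_Sing_radius : ((forall z, ~ Sing X phi z) \/
  (exists l : list X, (forall z, Sing X phi z <-> In z l) /\
     forall z, Sing X phi z -> isolated_point X z)) ->
  exists r0, 0 < r0 /\ forall sg y, Sing X phi sg -> d sg y < r0 -> y = sg.
Proof.
  intros [Hnone|[l [Hl Hiso]]].
  - exists 1. split; [lra|]. intros sg y Hs. exfalso. exact (Hnone sg Hs).
  - assert (Hr : forall z, exists r, 0 < r /\ (Sing X phi z -> forall y, d z y < r -> y = z)).
    { intros z. destruct (classic (Sing X phi z)) as [Hz|Hz].
      - destruct (Hiso z Hz) as [r [Hr Hb]]. exists r. auto.
      - exists 1. split; [lra| contradiction]. }
    destruct (choice _ Hr) as [rad Hrad].
    destruct (list_min_pos rad l) as [m [Hm Hmin]]; [intros z _; apply Hrad|].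
    exists m. split; [exact Hm|]. intros sg y Hs Hd.
    apply (proj2 (Hrad sg) Hs). pose proof (Hmin sg (proj1 (Hl sg) Hs)). lra.
Qed.

Section IsolatedSingularities.
Variable r0 : R.
Hypothesis r0_pos : 0 < r0.
Hypothesis Sing_isolated : forall sg y, Sing X phi sg -> d sg y < r0 -> y = sg.

Lemma nonsingular_of_close y z : ~ Sing X phi y -> d z y < r0 -> ~ Sing X phi z.
Proof. intros Hy Hzy Hz. apply Hy. rewrite (Sing_isolated z y Hz Hzy). exact Hz. Qed.

Lemma dist_Sing_uniform_pos : exists c, 0 < c /\
  forall z, ~ Sing X phi z -> c <= Defs.dist X z (Sing X phi).
Proof.
  destruct (classic (exists z, ~ Sing X phi z)) as [[z0 Hz0]|Hnone].
  2:{ exists 1. split; [lra|]. intros z Hz. exfalso. apply Hnone. exists z. exact Hz. }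
  exists (Rmin r0 (diam X)). split; [apply Rmin_pos; [exact r0_pos| exact (diam_pos_of_nonsingular z0 Hz0)]|].
  intros z Hz. apply dist_ge_of_far. intros sg Hsg.
  destruct (Rlt_le_dec (d z sg) r0) as [Hl|Hl]; [exfalso|exact Hl].
  rewrite d_sym in Hl. exact (nonsingular_of_close z sg Hz Hl Hsg).
Qed.

(* Under isolation the nonsingular points form a compact set. *)
Lemma nonsingular_uniform (Q : R -> X -> Prop) :
  (forall a a' w, 0 < a' <= a -> Q a w -> Q a' w) ->
  (forall z, ~ Sing X phi z -> exists r a, 0 < r /\ 0 < a /\ forall w, d z w < r -> Q a w) ->
  exists a, 0 < a /\ forall w, ~ Sing X phi w -> Q a w.
Proof.
  intros Hmono Hloc.
  assert (Hra : forall z, exists ra : R * R, 0 < fst ra /\ 0 < snd ra /\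
    (~ Sing X phi z -> forall w, d z w < fst ra -> Q (snd ra) w) /\ (Sing X phi z -> fst ra = r0)).
  { intros z. destruct (classic (Sing X phi z)) as [Hz|Hz].
    - exists (r0, 1). simpl. repeat split; auto; [lra| contradiction].
    - destruct (Hloc z Hz) as [r [a [Hr [Ha HQ]]]]. exists (r, a). simpl.
      repeat split; auto. contradiction. }
  destruct (choice _ Hra) as [ra Hra'].
  destruct (finite_ball_cover X (fun _ => True) (fun z => fst (ra z)) X_compact) as [l Hl];
    [intros z; apply Hra'|].
  destruct (list_min_pos (fun z => snd (ra z)) l) as [a [Ha Hmin]]; [intros z _; apply Hra'|].
  exists a. split; [exact Ha|]. intros w Hw.
  destruct (Hl w I) as [z [Hz [_ Hzw]]].
  destruct (Hra' z) as [_ [_ [HQ Hsing]]].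
  assert (Hz' : ~ Sing X phi z).
  { intros Hs. rewrite (Hsing Hs) in Hzw. exact (nonsingular_of_close w z Hw Hzw Hs). }
  apply Hmono with (snd (ra z)); [split; [exact Ha| exact (Hmin z Hz)]| exact (HQ Hz' w Hzw)].
Qed.

Lemma no_short_periods : exists p0, 0 < p0 /\
  forall z r, ~ Sing X phi z -> 0 < r <= p0 -> phi r z <> z.
Proof.
  destruct (nonsingular_uniform (fun a w => exists t, a < d w (phi t w))) as [a [Ha Hunif]].
  - intros a a' w Ha' [t Ht]. exists t. lra.
  - intros z Hz. destruct (nonsingular_moves z Hz) as [t Ht].
    set (a0 := d z (phi t z)) in *.
    destruct (phi_continuous t z (a0 / 3)) as [dl [Hdl Hc]]; [lra|].
    exists (Rmin dl (a0 / 3)), (a0 / 3). split; [apply Rmin_pos; lra|]. split; [lra|].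
    intros w Hw. exists t. pose proof (Rmin_l dl (a0 / 3)). pose proof (Rmin_r dl (a0 / 3)).
    assert (d (phi t z) (phi t w) < a0 / 3) by (apply Hc; [rewrite Rminus_diag, Rabs_R0|]; lra).
    pose proof (d_triangle X z w (phi t z)). pose proof (d_triangle X w (phi t w) (phi t z)).
    rewrite (d_sym X (phi t w) (phi t z)) in *. unfold a0 in *. lra.
  - destruct (flow_small_time_uniform a Ha) as [eta [Heta Hsmall]].
    exists (eta / 2). split; [lra|]. intros z r Hz Hr Hrz.
    destruct (Hunif z Hz) as [t Ht].
    destruct (phi_periodic_reduce r z t ltac:(lra) Hrz) as [r' [Hr' E]]. rewrite E in Ht.
    pose proof (Hsmall r' z ltac:(rewrite Rabs_right; lra)). lra.
Qed.

Section NoShortPeriods.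
Variable p0 : R.
Hypothesis p0_pos : 0 < p0.
Hypothesis no_period_le_p0 : forall z r, ~ Sing X phi z -> 0 < r <= p0 -> phi r z <> z.

Lemma uniform_displacement mu : 0 < mu <= p0 -> exists k, 0 < k /\
  forall z r, ~ Sing X phi z -> mu <= Rabs r <= p0 -> k <= d z (phi r z).
Proof.
  intros Hmu.
  destruct (nonsingular_uniform (fun k w => forall r, mu <= r <= p0 -> k <= d w (phi r w)))
    as [k [Hk Hunif]].
  - intros k k' w Hk' Hw r Hr. specialize (Hw r Hr). lra.
  - intros z Hz.
    destruct (continuity_ab_min (fun r => d z (phi r z)) mu p0) as [rm [Hmin Hrm]]; [lra| |].
    { intros c _. apply continuity_pt_filterlim, (filterlim_locally (T := R_UniformSpace)).
      intros [e He]. simpl.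
      destruct (phi_continuous c z e He) as [dl [Hdl Hc]].
      exists (mkposreal dl Hdl). intros y Hy. simpl in Hy.
      pose proof (Hc y z Hy ltac:(rewrite d_refl; lra)).
      pose proof (d_triangle X z (phi c z) (phi y z)). pose proof (d_triangle X z (phi y z) (phi c z)).
      rewrite (d_sym X (phi y z) (phi c z)) in *. apply Rabs_def1; simpl; unfold minus, plus, opp; simpl; lra. }
    set (m0 := d z (phi rm z)) in *.
    assert (Hm0 : 0 < m0) by (apply d_pos_of_neq; intros E; apply (no_period_le_p0 z rm Hz); [lra| auto]).
    destruct (flow_equicontinuous_on_bounded_times p0 (m0 / 3)) as [eta [Heta Heq]]; [lra|].
    exists (Rmin eta (m0 / 3)), (m0 / 3). split; [apply Rmin_pos; lra|]. split; [lra|].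
    intros w Hw r Hr. pose proof (Rmin_l eta (m0 / 3)). pose proof (Rmin_r eta (m0 / 3)).
    assert (d (phi r z) (phi r w) < m0 / 3) by (apply Heq; lra).
    pose proof (Hmin r Hr). simpl in *.
    pose proof (d_triangle X z w (phi r z)). pose proof (d_triangle X w (phi r w) (phi r z)).
    rewrite (d_sym X (phi r w) (phi r z)) in *. lra.
  - exists k. split; [exact Hk|]. intros z r Hz Hr. destruct (Rle_dec 0 r) as [Hr0|Hr0].
    + rewrite Rabs_right in Hr by lra. apply Hunif; auto.
    + (* negative times: run the orbit backwards from [phi r z] *)
      rewrite Rabs_left in Hr by lra.
      assert (Hz' : ~ Sing X phi (phi r z)) by (intros H; apply Hz; exact (Sing_of_phi z r H)).
      replace (d z (phi r z)) with (d (phi r z) (phi (- r) (phi r z))) by (rewrite phi_opp_l; apply d_sym).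
      apply Hunif; [exact Hz'| lra].
Qed.

Lemma tracking_oscillation mu : 0 < mu <= p0 -> exists eta del, 0 < eta /\ 0 < del /\
  forall x y s, ~ Sing X phi y -> continuity s ->
  (forall t, d (phi t x) (phi (s t) y) <= del) ->
  forall sg sg', sg <= sg' <= sg + eta -> Rabs (s sg' - s sg) < mu.
Proof.
  intros Hmu.
  destruct (uniform_displacement mu Hmu) as [k [Hk Hdisp]].
  destruct (flow_small_time_uniform (k / 4)) as [eta [Heta Hsmall]]; [lra|].
  exists (eta / 2), (k / 4). split; [lra|]. split; [lra|].
  intros x y s Hy Hs Hclose.
  (* over a time too short for [x] to move, [phi (s _) y] cannot be displaced by [mu] *)
  assert (Hjump : forall sg t2, sg <= t2 <= sg + eta / 2 -> Rabs (s t2 - s sg) <> mu).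
  { intros sg t2 Ht2 Hv.
    set (w := phi (s sg) y).
    assert (E : phi (s t2 - s sg) w = phi (s t2) y) by (unfold w; rewrite <- phi_add; f_equal; ring).
    assert (B : k <= d w (phi (s t2 - s sg) w)).
    { apply Hdisp; [intros Hw; apply Hy, (Sing_of_phi y (s sg) Hw)| lra]. }
    rewrite E in B.
    assert (C : d (phi sg x) (phi t2 x) < k / 4).
    { replace t2 with (t2 - sg + sg) by ring. rewrite phi_add. apply Hsmall. rewrite Rabs_right; lra. }
    pose proof (Hclose sg) as C1. pose proof (Hclose t2) as C2. fold w in C1. rewrite d_sym in C1.
    pose proof (d_triangle X w (phi sg x) (phi (s t2) y)).
    pose proof (d_triangle X (phi sg x) (phi t2 x) (phi (s t2) y)). lra. }
  intros sg sg' Hsg.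
  destruct (Rlt_le_dec (Rabs (s sg' - s sg)) mu) as [Hl|Hl]; [exact Hl| exfalso].
  assert (Hc : exists c, Rabs (c - s sg) = mu /\ (s sg - c) * (s sg' - c) <= 0).
  { destruct (Rle_dec 0 (s sg' - s sg)).
    - exists (s sg + mu). replace (s sg + mu - s sg) with mu by ring.
      rewrite Rabs_right in * by lra. split; [reflexivity| nra].
    - exists (s sg - mu). replace (s sg - mu - s sg) with (- mu) by ring.
      rewrite Rabs_Ropp, Rabs_right by lra. rewrite Rabs_left in Hl by lra. split; [reflexivity| nra]. }
  destruct Hc as [c [Hc Hp]].
  destruct (ivt_between s sg sg' c Hs ltac:(lra) Hp) as [t2 [Ht2 Ht2']].
  apply (Hjump sg t2); [lra| rewrite Ht2'; exact Hc].
Qed.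

Lemma tracking_increment h : 0 < h <= p0 / 2 -> exists del, 0 < del /\
  forall x y s, ~ Sing X phi y -> (forall t, d (phi t x) (phi (s t) y) <= del) ->
  (forall sg, Rabs (s (sg + h) - s sg) < p0 / 2) ->
  forall sg, Rabs (s (sg + h) - s sg - h) < h / 2.
Proof.
  intros Hh.
  destruct (uniform_displacement (h / 2)) as [k [Hk Hdisp]]; [lra|].
  destruct (flow_time_map_uniform h (k / 2)) as [om [Hom Hu]]; [lra|].
  exists (Rmin (k / 4) (om / 2)). split; [apply Rmin_pos; lra|].
  intros x y s Hy Hclose Hstep sg.
  pose proof (Rmin_l (k / 4) (om / 2)). pose proof (Rmin_r (k / 4) (om / 2)).
  set (w := phi h (phi (s sg) y)).
  set (r := s (sg + h) - s sg - h).
  destruct (Rlt_le_dec (Rabs r) (h / 2)) as [Hl|Hl]; [exact Hl| exfalso].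
  assert (E : phi r w = phi (s (sg + h)) y) by (unfold w, r; rewrite <- !phi_add; f_equal; ring).
  assert (B : k <= d w (phi r w)).
  { apply Hdisp.
    - intros Hw. apply Hy, (Sing_of_phi y (s sg)), (Sing_of_phi _ h), Hw.
    - split; [exact Hl|]. pose proof (Hstep sg).
      pose proof (Rabs_triang (s (sg + h) - s sg) (- h)) as T.
      rewrite Rabs_Ropp, (Rabs_right h) in T by lra.
      replace (s (sg + h) - s sg + - h) with r in T by (unfold r; ring). lra. }
  assert (W : d (phi (sg + h) x) w < k / 2).
  { rewrite Rplus_comm, phi_add. apply Hu. pose proof (Hclose sg). lra. }
  rewrite E in B. pose proof (Hclose (sg + h)).
  pose proof (d_triangle X w (phi (sg + h) x) (phi (s (sg + h)) y)). rewrite d_sym in W. lra.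
Qed.

Lemma tracking_near_increasing_homeo mu : 0 < mu -> exists del, 0 < del /\
  forall x y s, ~ Sing X phi y -> continuity s -> (forall t, d (phi t x) (phi (s t) y) <= del) ->
  exists H, increasing_homeo H /\ forall t, Rabs (H t - s t) <= mu.
Proof.
  intros Hmu. set (mu1 := Rmin mu (p0 / 2)).
  assert (Hmu1 : 0 < mu1 <= mu /\ mu1 <= p0 / 2).
  { unfold mu1. split; [split; [apply Rmin_pos; lra| apply Rmin_l]| apply Rmin_r]. }
  destruct (tracking_oscillation mu1 ltac:(lra)) as [eta [del1 [Heta [Hdel1 Hosc]]]].
  set (h := Rmin eta (p0 / 2)).
  assert (Hh : 0 < h <= eta /\ h <= p0 / 2).
  { unfold h. split; [split; [apply Rmin_pos; lra| apply Rmin_l]| apply Rmin_r]. }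
  destruct (tracking_increment h ltac:(lra)) as [del2 [Hdel2 Hinc]].
  exists (Rmin del1 del2). split; [apply Rmin_pos; lra|].
  intros x y s Hy Hs Hclose.
  pose proof (Rmin_l del1 del2). pose proof (Rmin_r del1 del2).
  assert (Hosc' : forall sg sg', sg <= sg' <= sg + h -> Rabs (s sg' - s sg) < mu1).
  { intros sg sg' Hsg. apply (Hosc x y s Hy Hs); [intros t; specialize (Hclose t); lra| lra]. }
  destruct (increasing_homeo_near s h mu1 Hs ltac:(lra)) as [g [Hg Hnear]].
  - apply (Hinc x y s Hy); [intros t; specialize (Hclose t); lra|].
    intros sg. specialize (Hosc' sg (sg + h) ltac:(lra)). lra.
  - exact Hosc'.
  - exists g. split; [exact Hg|]. intros t. specialize (Hnear t). lra.
Qed.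

Lemma tracked_point_on_orbit mu : 0 < mu -> exists del, 0 < del /\
  forall x y s, ~ Sing X phi x -> continuity s -> (forall t, d (phi t x) (phi (s t) y) <= del) ->
  exists v t0, y = phi v x /\ Rabs (s t0 + v - t0) <= mu.
Proof.
  intros Hmu.
  destruct dist_Sing_uniform_pos as [c [Hc Hdist]].
  destruct (phi_sexp (mu / 2)) as [dse [Hdse Hse]]; [lra|].
  assert (Hdc : 0 < dse * c) by (apply Rmult_lt_0_compat; lra).
  destruct (flow_small_time_uniform (dse * c / 2)) as [eta [Heta Hsmall]]; [lra|].
  set (mu1 := Rmin (mu / 2) (eta / 2)).
  assert (Hmu1 : 0 < mu1 <= mu / 2 /\ mu1 <= eta / 2).
  { unfold mu1. split; [split; [apply Rmin_pos; lra| apply Rmin_l]| apply Rmin_r]. }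
  destruct (tracking_near_increasing_homeo mu1 ltac:(lra)) as [del1 [Hdel1 Hnear]].
  set (del := Rmin del1 (Rmin (dse * c / 2) (r0 / 2))).
  assert (Hdel : 0 < del /\ del <= del1 /\ del <= dse * c / 2 /\ del <= r0 / 2).
  { unfold del. pose proof (Rmin_l del1 (Rmin (dse * c / 2) (r0 / 2))).
    pose proof (Rmin_r del1 (Rmin (dse * c / 2) (r0 / 2))).
    pose proof (Rmin_l (dse * c / 2) (r0 / 2)). pose proof (Rmin_r (dse * c / 2) (r0 / 2)).
    split; [repeat apply Rmin_pos; lra| lra]. }
  exists del. split; [lra|]. intros x y s Hx Hs Hclose.
  assert (Hy : ~ Sing X phi y).
  { intros Hy. pose proof (Hclose 0) as H0. rewrite phi_0, (Hy (s 0)) in H0.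
    rewrite d_sym in H0. apply (nonsingular_of_close x y Hx); [lra| exact Hy]. }
  destruct (Hnear x y s Hy Hs ltac:(intros t; specialize (Hclose t); lra)) as [g [Hg Hgs]].
  (* [s] can be replaced by the homeomorphism [g] at the cost of [dse * c / 2] *)
  destruct (Hse x y g Hg) as [t0 [u [Hu Hu']]].
  - intros t.
    assert (Hct : c <= Defs.dist X (phi t x) (Sing X phi)).
    { apply Hdist. intros Ht. apply Hx, (Sing_of_phi x t), Ht. }
    assert (Hsh : d (phi (s t) y) (phi (g t) y) < dse * c / 2).
    { replace (g t) with (g t - s t + s t) by ring. rewrite phi_add. apply Hsmall.
      pose proof (Hgs t). lra. }
    pose proof (Hclose t). pose proof (d_triangle X (phi t x) (phi (s t) y) (phi (g t) y)).
    apply Rle_trans with (dse * c); [lra| apply Rmult_le_compat_l; lra].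
  - exists (u - g t0), t0. split.
    + replace (u - g t0) with (- g t0 + u) by ring. rewrite phi_add, <- Hu', phi_opp_l. reflexivity.
    + replace (s t0 + (u - g t0) - t0) with (- (g t0 - s t0) + (u - t0)) by ring.
      eapply Rle_trans; [apply Rabs_triang|]. rewrite Rabs_Ropp.
      pose proof (Hgs t0). assert (Rabs (u - t0) <= mu / 2) by (apply Rabs_le; lra). lra.
Qed.

End NoShortPeriods.

Lemma expansive_of_isolated_Sing : expansive X phi.
Proof.
  intros eps Heps.
  destruct no_short_periods as [p0 [Hp0 Hnp]].
  set (mu := Rmin eps p0).
  assert (Hmu : 0 < mu <= eps /\ mu <= p0).
  { unfold mu. split; [split; [apply Rmin_pos; lra| apply Rmin_l]| apply Rmin_r]. }
  destruct (uniform_displacement p0 Hnp mu ltac:(lra)) as [k [Hk Hdisp]].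
  destruct (tracked_point_on_orbit p0 Hp0 Hnp mu ltac:(lra)) as [del [Hdel Htrack]].
  set (del' := Rmin del (Rmin (k / 2) (r0 / 2))).
  assert (Hdel' : 0 < del' /\ del' <= del /\ del' <= k / 2 /\ del' <= r0 / 2).
  { unfold del'. pose proof (Rmin_l del (Rmin (k / 2) (r0 / 2))).
    pose proof (Rmin_r del (Rmin (k / 2) (r0 / 2))).
    pose proof (Rmin_l (k / 2) (r0 / 2)). pose proof (Rmin_r (k / 2) (r0 / 2)).
    split; [repeat apply Rmin_pos; lra| lra]. }
  exists del'. split; [lra|]. intros x y s _ _ Hs Hs0 Hclose.
  destruct (classic (Sing X phi x)) as [Hx|Hx].
  { exists 0. split; [lra|]. rewrite phi_0. apply (Sing_isolated x y Hx).
    pose proof (Hclose 0) as H0. rewrite phi_0, Hs0, phi_0 in H0. lra. }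
  destruct (Htrack x y s Hx Hs ltac:(intros t; specialize (Hclose t); lra)) as [v [t0 [-> Hft0]]].
  (* [f t] is the time lag from [phi t x] to [phi (s t) y] along the orbit *)
  set (f := fun t => s t + v - t).
  assert (Hgap : forall t, ~ (mu <= Rabs (f t) <= p0)).
  { intros t Ht.
    assert (Hxt : ~ Sing X phi (phi t x)) by (intros H; apply Hx, (Sing_of_phi x t), H).
    pose proof (Hdisp (phi t x) (f t) Hxt Ht) as B.
    replace (phi (f t) (phi t x)) with (phi (s t) (phi v x)) in B
      by (rewrite <- !phi_add; f_equal; unfold f; ring).
    pose proof (Hclose t). lra. }
  assert (Hf : continuity f).
  { apply continuity_minus; [apply continuity_plus; [exact Hs|]|].
    - apply continuity_const. intros ? ?. reflexivity.
    - apply derivable_continuous, derivable_id. }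
  assert (Hf0 : Rabs (f t0) < mu).
  { destruct Hft0 as [Hl|He]; [exact Hl|]. exfalso. apply (Hgap t0). fold (f t0) in He. lra. }
  pose proof (continuous_abs_gap f mu p0 t0 Hf ltac:(lra) Hgap Hf0 0) as Hv.
  unfold f in Hv. rewrite Hs0 in Hv. replace (0 + v - 0) with v in Hv by ring.
  exists v. split; [apply Rabs_def2 in Hv; lra| reflexivity].
Qed.

End IsolatedSingularities.

End Flow.

Theorem mainTheorem9 (X : MetricSpace) (phi : R -> X -> X) :
  compact_space X -> is_flow X phi -> singular_expansive X phi ->
  countable_family X (periodic_orbit X phi) /\
  ((forall z, ~ Sing X phi z) \/
   (exists l : list X, (forall z, Sing X phi z <-> In z l) /\
      forall z, Sing X phi z -> isolated_point X z) ->
   expansive X phi) /\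
  (dynamically_isolated X phi (Sing X phi) ->
   forall t, 0 < t -> finite_family X (periodic_orbit_period_le X phi t)).
Proof.
  intros Hcomp Hflow Hsexp. split; [|split].
  - exact (periodic_orbits_countable X phi Hcomp Hflow Hsexp).
  - intros Hsing. destruct (isolated_Sing_radius X phi Hsing) as [r0 [Hr0 Hiso]].
    exact (expansive_of_isolated_Sing X phi Hcomp Hflow Hsexp r0 Hr0 Hiso).
  - exact (short_periodic_orbits_finite X phi Hcomp Hflow Hsexp).
Qed.
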